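(* Let $(X,\mathcal{A})$ be a cross resolvable design with $v$ points, $b$ blocks of size $k$, $r$ parallel classes and $b_r=b/r$ blocks per parallel class, and let $z\in\{2,\dots,r\}$ be such that $\mu_z$ exists. Consider the multi-access coded caching scheme built from it (described in the context). Then for every point $x\in X$, the number of users having access to subfile index $x$ (i.e., users $U_H$ with $x\in\bigcup_{B\in H}B$) is exactly $\binom{r}{z}\left(b_r^z-(b_r-1)^z\right)$.
   Context: A resolvable design $(X,\mathcal{A})$: $X$ a finite set of $v$ points, $\mathcal{A}$ a collection of $b$ blocks (subsets of $X$) each of size $k$, partitioned into $r$ parallel classes, each parallel class being a set of $b_r=b/r=v/k$ pairwise disjoint blocks whose union is $X$. The $z$-th cross intersection number $\mu_z$ exists if $|B_1\cap\cdots\cap B_z|$ equals the same nonzero value $\mu_z$ for every choice of blocks from $z$ distinct parallel classes; the design is cross resolvable if some $\mu_i$, $i\in\{2,\dots,r\}$, exists. Multi-access scheme: there are $b$ caches, one for each block; there are $K=\binom{r}{z}b_r^z$ users $U_H$, one for each set $H$ of $z$ blocks taken from $z$ distinct parallel classes, and user $U_H$ is connected to the $z$ caches corresponding to the blocks in $H$. Each of $N$ files $W_i$ is split into $v$ equal subfiles $W_{i,x}$, $x\in X$, and the cache of block $A_j$ stores $W_{i,x}$ for all $x\in A_j$ and all $i\in[N]$. A user has access to subfile index $x$ if $x$ lies in one of the blocks of the caches it is connected to. *)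

From mathcomp Require Import all_boot.
Set Implicit Arguments. Unset Strict Implicit. Unset Printing Implicit Defensive.

(* A block is identified by its label (i, j) : 'I_r * 'I_br (the b = r*br caches). *)

Definition resolvable (X : finType) (r br k : nat) (B : 'I_r -> 'I_br -> {set X}) : Prop :=
  [/\ forall i j, #|B i j| = k,
      forall i j j', j != j' -> [disjoint B i j & B i j'] &
      forall i, \bigcup_(j < br) B i j = [set: X]].

(* H is a set of z blocks taken from z distinct parallel classes
   (these index the users U_H). *)
Definition user_set (r br z : nat) (H : {set 'I_r * 'I_br}) : bool :=
  (#|H| == z) && [forall p in H, forall q in H, (p.1 == q.1) ==> (p == q)].

Definition cross_mu_exists (X : finType) (r br z : nat) (B : 'I_r -> 'I_br -> {set X}) : Prop :=
  exists mu : nat, 0 < mu /\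
    forall H : {set 'I_r * 'I_br}, user_set z H ->
      #|\bigcap_(p in H) B p.1 p.2| = mu.

Definition has_access (X : finType) (r br : nat) (B : 'I_r -> 'I_br -> {set X})
  (H : {set 'I_r * 'I_br}) (x : X) : bool :=
  x \in \bigcup_(p in H) B p.1 p.2.

From mathcomp Require Import all_boot.

Set Implicit Arguments.
Unset Strict Implicit.
Unset Printing Implicit Defensive.

(* A set H of blocks meeting each parallel class at most once is the graph of a
   partial function from classes to block labels.  Hence the users whose blocks
   all lie in prescribed sets F i of size m are counted by choosing the z classes
   met and then a block of F i for each of them: 'C(r, z) * m ^ z of them.  A user
   misses the point x exactly when none of its blocks contains x; since x lies in
   exactly one block of each class this is the case m = br - 1, while all users
   are the case m = br.  The count is the difference of the two. *)

Section PartialGraphs.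

Variables (I J : finType) (j0 : J).

Definition functional (H : {set I * J}) : bool :=
  [forall p in H, forall q in H, (p.1 == q.1) ==> (p == q)].

Definition graph_on (S : {set I}) (f : I -> J) : {set I * J} :=
  [set (i, f i) | i in S].

Definition rel_dom (H : {set I * J}) : {set I} := [set p.1 | p in H].

Definition rel_fun (H : {set I * J}) : {ffun I -> J} :=
  [ffun i => odflt j0 [pick j | (i, j) \in H]].

Lemma functionalP (H : {set I * J}) :
  reflect {in H &, forall p q, p.1 = q.1 -> p = q} (functional H).
Proof.
apply: (iffP forall_inP) => [fH p q pH qH /eqP pq | fH p pH].
  by apply/eqP; have /forall_inP/(_ q qH)/implyP := fH p pH; apply.
by apply/forall_inP => q qH; apply/implyP => /eqP/(fH p q pH qH)->.
Qed.

Lemma rel_funE (H : {set I * J}) p : functional H -> p \in H -> rel_fun H p.1 = p.2.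
Proof.
move=> /functionalP fH pH; rewrite ffunE; case: pickP => [j jH | /(_ p.2)].
  by rewrite -(fH _ _ jH pH).
by rewrite -surjective_pairing pH.
Qed.

Lemma rel_funK (H : {set I * J}) : functional H -> graph_on (rel_dom H) (rel_fun H) = H.
Proof.
move=> fH; apply/setP => q; apply/imsetP/idP => [[_ /imsetP[p pH ->] ->] | qH].
  by rewrite rel_funE // -surjective_pairing.
by exists q.1; [apply: imset_f | rewrite rel_funE // -surjective_pairing].
Qed.

Lemma rel_fun_support (H : {set I * J}) : j0.-support (rel_fun H) \subset rel_dom H.
Proof.
apply/subsetP => i; rewrite inE ffunE.
by case: pickP => [j ijH _ | _]; [apply/imsetP; exists (i, j) | rewrite eqxx].
Qed.

Lemma rel_dom_graph_on S f : rel_dom (graph_on S f) = S.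
Proof.
apply/setP => i; apply/imsetP/idP => [[_ /imsetP[i' i'S ->] ->] // | iS].
by exists (i, f i); first exact: imset_f.
Qed.

Lemma card_graph_on S f : #|graph_on S f| = #|S|.
Proof. by apply: card_imset => i i' []. Qed.

Lemma graph_on_functional S f : functional (graph_on S f).
Proof.
by apply/functionalP => _ _ /imsetP[i _ ->] /imsetP[i' _ ->] /= ->.
Qed.

Lemma card_rel_dom (H : {set I * J}) : functional H -> #|rel_dom H| = #|H|.
Proof. by move=> fH; rewrite -{2}(rel_funK fH) card_graph_on. Qed.

Lemma graph_on_inj (S S' : {set I}) (f f' : {ffun I -> J}) :
    j0.-support f \subset S -> j0.-support f' \subset S' ->
  graph_on S f = graph_on S' f' -> (S, f) = (S', f').
Proof.
move=> sfS sfS' eq_graph.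
have eqS : S = S' by rewrite -(rel_dom_graph_on S f) eq_graph rel_dom_graph_on.
subst S'; congr (_, _); apply/ffunP => i; have [iS | iNS] := boolP (i \in S).
  have : (i, f i) \in graph_on S f' by rewrite -eq_graph imset_f.
  by case/imsetP => i' _ [-> ->].
have off_support g : j0.-support g \subset S -> g i = j0.
  by move/subsetP/(_ i)/contraNN/(_ iNS); rewrite inE negbK => /eqP.
by rewrite !off_support.
Qed.

Variables (F : I -> {set J}) (m : nat).
Hypothesis card_F : forall i, #|F i| = m.

Definition graph_codes (z : nat) : {set {set I} * {ffun I -> J}} :=
  [set p : {set I} * {ffun I -> J} | (#|p.1| == z) && (p.2 \in pfamily j0 p.1 F)].

Lemma card_graph_codes z : #|graph_codes z| = 'C(#|I|, z) * m ^ z.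
Proof.
rewrite -sum1_card (eq_bigl _ _ (fun p => in_set _ p)).
rewrite -(pair_big_dep (fun S : {set I} => #|S| == z)
                       (fun S g => g \in pfamily j0 S F) (fun _ _ => 1)) /=.
rewrite (eq_bigr (fun _ => m ^ z)) => [|S /eqP cardS]; last first.
  rewrite sum1_card card_pfamily -cardS cardE /image_mem.
  by elim: (enum_mem _) => //= i s ->; rewrite card_F expnS.
by rewrite sum_nat_const -card_draws; congr (_ * _); apply: eq_card => S; rewrite inE.
Qed.

Lemma partial_graphs_in z :
  [set H : {set I * J} | [&& #|H| == z, functional H & H \subset [set p | p.2 \in F p.1]]]
  = [set graph_on p.1 p.2 | p : {set I} * {ffun I -> J} in graph_codes z].
Proof.
apply/setP => H; rewrite inE; apply/idP/imsetP => [/and3P[cardH fH sHF] | ].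
  exists (rel_dom H, rel_fun H); last by rewrite rel_funK.
  rewrite inE /= card_rel_dom // cardH; apply/pfamilyP.
  split=> [|_ /imsetP[p pH ->]]; first exact: rel_fun_support.
  by rewrite rel_funE //; have := subsetP sHF p pH; rewrite inE.
case=> [[S f]]; rewrite inE /= => /andP[/eqP cardS /pfamilyP[_ fF]] ->.
rewrite card_graph_on cardS eqxx graph_on_functional /=.
by apply/subsetP => _ /imsetP[i iS ->]; rewrite inE fF.
Qed.

Lemma card_partial_graphs_in z :
  #|[set H : {set I * J} | [&& #|H| == z, functional H & H \subset [set p | p.2 \in F p.1]]]|
  = 'C(#|I|, z) * m ^ z.
Proof.
rewrite partial_graphs_in card_in_imset ?card_graph_codes //.
move=> [S f] [S' f']; rewrite !inE => /andP[_ /pfamilyP[sfS _]] /andP[_ /pfamilyP[sfS' _]].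
exact: graph_on_inj.
Qed.

End PartialGraphs.

Section ResolvableDesign.

Variables (X : finType) (r br k : nat) (B : 'I_r -> 'I_br -> {set X}).
Hypothesis resB : resolvable k B.

Lemma resolvable_cover i x : exists j, x \in B i j.
Proof.
case: resB => _ _ /(_ i) coverB.
have : x \in \bigcup_(j < br) B i j by rewrite coverB inE.
by case/bigcupP => j _; exists j.
Qed.

Lemma card_blocks_avoiding i x : #|[set j | x \notin B i j]| = br - 1.
Proof.
have [c xBc] := resolvable_cover i x.
have -> : [set j | x \notin B i j] = [set~ c].
  apply/setP => j; rewrite !inE; have [-> | jc] := eqVneq j c; first by rewrite xBc.
  by case: resB => _ /(_ i c j) disjB _; rewrite (disjointFr (disjB _) xBc) // eq_sym.
by rewrite cardsC1 card_ord subn1.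
Qed.

End ResolvableDesign.

Theorem lemma2 (X : finType) (r br k z : nat) (B : 'I_r -> 'I_br -> {set X}) :
  resolvable k B ->
  2 <= z <= r ->
  cross_mu_exists z B ->
  forall x : X,
    #|[set H : {set 'I_r * 'I_br} | user_set z H && has_access B H x]|
    = 'C(r, z) * (br ^ z - (br - 1) ^ z).
Proof.
(* The existence of mu_z is not needed; 1 < z only serves to make r, hence br,
   positive, which provides the default label j0. *)
move=> resB /andP[z_gt1 z_le_r] _ x.
have r_gt0 : 0 < r by rewrite (leq_trans _ z_le_r) // ltnW.
have [j0 _] := resolvable_cover resB (Ordinal r_gt0) x.
have card_all := card_partial_graphs_in j0 (fun _ : 'I_r => cardsT 'I_br) z.
have card_avoid := card_partial_graphs_in j0 (card_blocks_avoiding resB ^~ x) z.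
rewrite !card_ord in card_all card_avoid.
rewrite mulnBr -card_avoid -card_all.
rewrite -cardsDS; last first.
  by apply/subsetP => H; rewrite !inE => /and3P[-> -> _]; apply/subsetP => p; rewrite !inE.
apply: eq_card => H; rewrite !inE /user_set /has_access -/(functional H).
have -> : H \subset [set p | p.2 \in [set: 'I_br]] by apply/subsetP => p; rewrite !inE.
case: (#|H| == z) (functional H) => [] [] //=; rewrite andbT.
apply/bigcupP/subsetPn.
  by case=> p pH xBp; exists p; rewrite // !inE xBp.
by case=> p pH; rewrite !inE negbK => xBp; exists p.
Qed.
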